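(* Fix real $a$, $b>0$, $c>0$ and a prior $F$ with support $[\alpha,\beta]\subset(0,c)$ and positive variance. Let $x^u(\theta)=k\theta+d$ be the unique symmetric Bayesian Nash equilibrium of the affine relaxation (for $a=0$, $x^u(\theta)=(c-\theta)/(2b)$), and assume it is fully active, i.e. $x^u(\beta)\ge0$. Let $\underline x=x^u(\beta)$ and $\overline x=x^u(\alpha)$. If $$\overline x\le\frac1\alpha,\qquad c^2\le2b,\qquad a\le b\alpha,\qquad c\alpha^2-2b\alpha+a\ge0,$$ then $x^u$ is a symmetric Bayesian Nash equilibrium of the truncated Bayesian contest.
   Context: Let $P(x,y)=\tfrac12+(x-y)\bigl(c-b(x+y)+axy\bigr)$ and $\bar P=\min\{1,\max\{0,P\}\}$. Types are i.i.d. from $F$. In the affine relaxation, actions are real numbers and a type-$\theta$ player choosing $\tilde x$ against opponent strategy $x(\cdot)$ receives $\int[P(\tilde x,x(\theta'))-\theta\tilde x]\,dF(\theta')$. In the truncated Bayesian contest, actions are efforts in $[0,\infty)$ and the payoff is $\int[\bar P(\tilde x,x(\theta'))-\theta\tilde x]\,dF(\theta')$. *)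

From HB Require Import structures.
From mathcomp Require Import all_boot all_order all_algebra.
From mathcomp Require Import all_classical all_reals all_analysis.
Set Implicit Arguments. Unset Strict Implicit. Unset Printing Implicit Defensive.
Import Order.TTheory GRing.Theory Num.Theory.
Import numFieldNormedType.Exports.
Local Open Scope classical_set_scope.
Local Open Scope ring_scope.

Section contest.
Context {R : realType}.

Definition Pwin (a b c x y : R) : R :=
  1 / 2 + (x - y) * (c - b * (x + y) + a * x * y).

Definition Pbar (a b c x y : R) : R :=
  Num.min 1 (Num.max 0 (Pwin a b c x y)).

Definition payoff_aff (F : probability R R) (a b c : R) (s : R -> R)
  (th xt : R) : \bar R :=
  (\int[F]_(t in setT) (Pwin a b c xt (s t) - th * xt)%:E)%E.

Definition payoff_trunc (F : probability R R) (a b c : R) (s : R -> R)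
  (th xt : R) : \bar R :=
  (\int[F]_(t in setT) (Pbar a b c xt (s t) - th * xt)%:E)%E.

Definition support_is (F : probability R R) (al be : R) : Prop :=
  F `[al, be]%classic = 1%E /\
  forall U : set R, open U -> U `&` `[al, be]%classic !=set0 -> (0 < F U)%E.

Definition prior_mean (F : probability R R) : \bar R :=
  (\int[F]_(t in setT) t%:E)%E.

Definition prior_variance (F : probability R R) : \bar R :=
  (\int[F]_(t in setT) ((t - fine (prior_mean F)) ^+ 2)%:E)%E.

Definition symBNE_affine (F : probability R R) (a b c al be : R)
  (s : R -> R) : Prop :=
  forall th, al <= th <= be ->
  forall xt : R, (payoff_aff F a b c s th xt <= payoff_aff F a b c s th (s th))%E.

Definition symBNE_trunc (F : probability R R) (a b c al be : R)
  (s : R -> R) : Prop :=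
  forall th, al <= th <= be ->
  0 <= s th /\
  forall xt : R, 0 <= xt ->
    (payoff_trunc F a b c s th xt <= payoff_trunc F a b c s th (s th))%E.

End contest.

From HB Require Import structures.
From mathcomp Require Import all_boot all_order all_algebra.
From mathcomp Require Import all_classical all_reals all_analysis.
From mathcomp Require Import measurable_realfun ring lra.
Import Order.TTheory GRing.Theory Num.Theory.
Import numFieldNormedType.Exports.
Local Open Scope classical_set_scope.
Local Open Scope ring_scope.

(** Revealed preference makes equilibrium efforts of the affine relaxation
    nonincreasing in the type, so on the support [[al, be]] the affine
    equilibrium takes values in [[k be + d, k al + d]], inside [[0, 1/al]].
    On [[0, 1/al]]^2 the winning probability [P] already lies in [[0, 1]]:
    [P(0, y) >= 0] because [c^2 <= 2b], [P(1/al, y) >= 0] because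
    [c al^2 - 2b al + a >= 0] and [a <= b al], and [P(., y)] is concave in
    between since [a y <= b].  Hence truncation changes neither the
    equilibrium payoff nor the payoff of any deviation [x <= 1/al], while a
    deviation [x > 1/al] costs [th x > 1] and is worse than effort [0], whose
    payoff [P(0, y)] is nonnegative. *)

Lemma continuous_subr {R : realType} {T : topologicalType} {f : T -> R} (r : R) :
  continuous f -> continuous (fun t => f t - r).
Proof. by move=> cf t; apply: continuousB; [exact: cf | exact: cst_continuous]. Qed.

Section probability_on_segment.
Context {R : realType} {F : probability R R} {al be : R}.
Hypothesis F_itv : F `[al, be]%classic = 1%E.

Lemma probability_itvC : F (~` `[al, be]%classic) = 0%E.
Proof. by rewrite probability_setC // F_itv subee. Qed.

Lemma integral_setT_itv (f : R -> R) : measurable_fun setT f ->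
  (\int[F]_(t in setT) (f t)%:E = \int[F]_(t in `[al, be]) (f t)%:E)%E.
Proof.
move=> /measurable_EFinP mf; rewrite [RHS]integral_mkcond.
apply: ae_eq_integral => //.
  by apply/(measurable_restrictT _ _).1 => //; exact: measurable_funS mf.
exists (~` `[al, be]%classic); split; [exact: measurableC | exact: probability_itvC |].
by apply: subsetC => t itv_t _; rewrite patchE mem_set.
Qed.

Lemma continuous_integrable_itv (f : R -> R) : continuous f ->
  F.-integrable `[al, be]%classic (EFin \o f).
Proof.
move=> cf; apply: measurable_bounded_integrable => //.
- by rewrite (le_lt_trans (probability_le1 _ _)) ?ltry.
- exact: measurable_funS (continuous_measurable_fun cf).
- have := compact_bounded
    (continuous_compact (continuous_subspaceT cf) (@segment_compact _ al be)).
  rewrite /bounded_set /bounded_near; apply: filterS => M fM t itv_t.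
  by apply: fM; exists t.
Qed.

Lemma le_integral_continuous (f g : R -> R) : continuous f -> continuous g ->
  {in `[al, be], forall t, f t <= g t} ->
  (\int[F]_(t in setT) (f t)%:E <= \int[F]_(t in setT) (g t)%:E)%E.
Proof.
move=> cf cg fg.
rewrite !integral_setT_itv; try exact: continuous_measurable_fun.
apply: le_integral; rewrite ?continuous_integrable_itv // => t.
by rewrite inE /= => /fg; rewrite lee_fin.
Qed.

Lemma integral_continuous_subr (f : R -> R) (r : R) : continuous f ->
  (\int[F]_(t in setT) (f t - r)%:E = (fine (\int[F]_(t in setT) (f t)%:E) - r)%:E)%E.
Proof.
move=> cf; have cfr := continuous_subr r cf.
rewrite (integral_setT_itv (fun t => f t - r)) ?integral_setT_itv;
  try exact: continuous_measurable_fun.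
under eq_integral do rewrite EFinB.
rewrite integralB_EFin ?continuous_integrable_itv //; last exact: cst_continuous.
rewrite integral_cst // -[X in (r%:E * X)%E]/(F `[al, be]%classic) F_itv mule1.
rewrite EFinB fineK //.
by apply: integrable_fin_num => //; exact: continuous_integrable_itv.
Qed.

End probability_on_segment.

Section winning_probability.
Context {R : realType} (a b c : R).

Lemma Pwin_add_swap x y : Pwin a b c x y + Pwin a b c y x = 1.
Proof. by rewrite /Pwin; field. Qed.

Lemma continuous_Pwin x : continuous (Pwin a b c x).
Proof.
have -> : Pwin a b c x = horner ((1 / 2)%:P +
    (x%:P - 'X) * (c%:P - b%:P * (x%:P + 'X) + (a * x)%:P * 'X)).
  by apply/funext => y; rewrite /Pwin !hornerE.
exact: continuous_horner.
Qed.

Lemma continuous_Pbar x : continuous (Pbar a b c x).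
Proof.
have -> : Pbar a b c x = cst 1 \min (cst 0 \max Pwin a b c x) by [].
move=> y; apply: continuous_min; first exact: cst_continuous.
by apply: continuous_max; [exact: cst_continuous | exact: continuous_Pwin].
Qed.

Lemma Pbar_le1 x y : Pbar a b c x y <= 1.
Proof. by rewrite /Pbar ge_min lexx. Qed.

Lemma Pbar_eq_Pwin x y : 0 <= Pwin a b c x y <= 1 -> Pbar a b c x y = Pwin a b c x y.
Proof. by move=> /andP[P_ge0 P_le1]; rewrite /Pbar (max_r P_ge0) (min_r P_le1). Qed.

Lemma Pwin_ge0_between u x y : 0 < u -> a * y <= b ->
  0 <= Pwin a b c 0 y -> 0 <= Pwin a b c u y -> 0 <= x <= u -> 0 <= Pwin a b c x y.
Proof.
move=> u_gt0 ay_le P0_ge0 Pu_ge0 /andP[x_ge0 x_le].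
(* [P(., y)] is a quadratic with leading coefficient [a y - b]. *)
have interp : u * Pwin a b c x y = (u - x) * Pwin a b c 0 y + x * Pwin a b c u y
    + (b - a * y) * x * u * (u - x) by rewrite /Pwin; ring.
rewrite -(pmulr_rge0 _ u_gt0) interp.
have ux_ge0 : 0 <= u - x by rewrite subr_ge0.
have bay_ge0 : 0 <= b - a * y by rewrite subr_ge0.
by rewrite !addr_ge0 // !mulr_ge0 // ltW.
Qed.

Variable al : R.
Hypotheses (b_gt0 : 0 < b) (al_gt0 : 0 < al) (c2_le : c ^+ 2 <= 2 * b).
Hypotheses (a_le : a <= b * al) (quad_ge0 : 0 <= c * al ^+ 2 - 2 * b * al + a).

Lemma Pwin0_ge0 y : 0 <= Pwin a b c 0 y.
Proof.
have sos : 2 * b * Pwin a b c 0 y = (2 * b * y - c) ^+ 2 / 2 + (2 * b - c ^+ 2) / 2.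
  by rewrite /Pwin; field.
rewrite -(pmulr_rge0 _ (mulr_gt0 (ltr0Sn _ 1) b_gt0)) sos.
by rewrite addr_ge0 ?divr_ge0 ?sqr_ge0 // subr_ge0.
Qed.

Lemma Pwin_inv_ge0 y : y <= al^-1 -> 0 <= Pwin a b c al^-1 y.
Proof.
move=> y_le; set u := al^-1.
have u_gt0 : 0 < u by rewrite invr_gt0.
have split_mid : c - b * (u + y) + a * u * y =
    u ^+ 2 * (c * al ^+ 2 - 2 * b * al + a) + (u - y) * (u * (b * al - a)).
  by rewrite /u; field; rewrite gt_eqF.
rewrite /Pwin addr_ge0 // mulr_ge0 ?subr_ge0 // -/u split_mid.
by rewrite addr_ge0 ?mulr_ge0 ?sqr_ge0 ?subr_ge0 // ltW.
Qed.

Lemma Pwin_ge0 x y : x \in `[0, al^-1] -> y \in `[0, al^-1] -> 0 <= Pwin a b c x y.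
Proof.
rewrite !in_itv /= => x_itv /andP[y_ge0 y_le].
apply: Pwin_ge0_between x_itv; rewrite ?invr_gt0 ?Pwin0_ge0 ?Pwin_inv_ge0 //.
have [a_ge0 | a_lt0] := leP 0 a; last by rewrite ltW // (le_lt_trans _ b_gt0) // nmulr_rle0.
apply: le_trans (ler_wpM2l a_ge0 y_le) _.
by rewrite -(ler_pM2r al_gt0) mulfVK ?gt_eqF.
Qed.

Lemma Pwin_le1 x y : x \in `[0, al^-1] -> y \in `[0, al^-1] -> Pwin a b c x y <= 1.
Proof.
by move=> x_itv y_itv; rewrite -(Pwin_add_swap x y) lerDl Pwin_ge0.
Qed.

End winning_probability.

Section affine_relaxation.
Context {R : realType} {F : probability R R} {a b c al be : R} {s : R -> R}.
Hypotheses (F_itv : F `[al, be]%classic = 1%E) (s_cont : continuous s).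

Lemma payoff_affE th x : payoff_aff F a b c s th x =
  (fine (\int[F]_(t in setT) (Pwin a b c x (s t))%:E) - th * x)%:E.
Proof.
apply: (integral_continuous_subr F_itv) => t.
exact: continuous_comp (s_cont t) (continuous_Pwin a b c x (s t)).
Qed.

Lemma symBNE_affine_antitone : symBNE_affine F a b c al be s ->
  {in `[al, be] &, forall th th', 0 <= (th' - th) * (s th - s th')}.
Proof.
move=> BNE th th'; rewrite !in_itv /= => th_itv th'_itv.
have := BNE th th_itv (s th'); have := BNE th' th'_itv (s th).
rewrite !payoff_affE !lee_fin; nra.
Qed.

End affine_relaxation.

Lemma le_affine_itv {R : realFieldType} [k al be t : R] (d : R) :
  k * (be - al) ^+ 2 <= 0 -> al <= t <= be -> k * be + d <= k * t + d <= k * al + d.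
Proof.
move=> slope /andP[al_t t_be].
have [k_le0 | k_gt0] := lerP k 0; first by apply/andP; split; nra.
have al_eq : al = be.
  apply/eqP; rewrite eq_sym -subr_eq0 -sqrf_eq0 eq_le sqr_ge0 andbT.
  by rewrite -(pmulr_rle0 _ k_gt0).
move: t_be; rewrite -al_eq => t_al.
have -> : t = al by apply/le_anti; rewrite t_al al_t.
by rewrite lexx.
Qed.

Section truncated_contest.
Context {R : realType} (F : probability R R) (a b c al be : R) (s : R -> R).
Hypotheses (b_gt0 : 0 < b) (al_gt0 : 0 < al) (c2_le : c ^+ 2 <= 2 * b).
Hypotheses (a_le : a <= b * al) (quad_ge0 : 0 <= c * al ^+ 2 - 2 * b * al + a).
Hypotheses (F_itv : F `[al, be]%classic = 1%E) (s_cont : continuous s).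
Hypothesis s_itv : {in `[al, be], forall t, s t \in `[0, al^-1]}.

Let Pwin_ge0_itv := Pwin_ge0 a b c al b_gt0 al_gt0 c2_le a_le quad_ge0.
Let Pwin_le1_itv := Pwin_le1 a b c al b_gt0 al_gt0 c2_le a_le quad_ge0.

Let continuous_payoff_aff x th : continuous (fun t => Pwin a b c x (s t) - th * x).
Proof.
apply: continuous_subr => t.
exact: continuous_comp (s_cont t) (continuous_Pwin a b c x (s t)).
Qed.

Let continuous_payoff_trunc x th : continuous (fun t => Pbar a b c x (s t) - th * x).
Proof.
apply: continuous_subr => t.
exact: continuous_comp (s_cont t) (continuous_Pbar a b c x (s t)).
Qed.

Lemma payoff_trunc_aff th x : x \in `[0, al^-1] ->
  payoff_trunc F a b c s th x = payoff_aff F a b c s th x.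
Proof.
move=> x_itv; apply/le_anti/andP.
by split; apply: (le_integral_continuous F_itv) => // t /s_itv st_itv;
  rewrite Pbar_eq_Pwin // Pwin_ge0_itv // Pwin_le1_itv.
Qed.

Lemma payoff_trunc_le_aff0 th x : al <= th -> al^-1 < x ->
  (payoff_trunc F a b c s th x <= payoff_aff F a b c s th 0)%E.
Proof.
move=> al_th x_gt; apply: (le_integral_continuous F_itv) => // t _.
have al_x : 1 < al * x by rewrite -(mulfV (lt0r_neq0 al_gt0)) ltr_pM2l.
have x_gt0 : 0 < x by rewrite (lt_trans _ x_gt) ?invr_gt0.
have th_x : 1 <= th * x by nra.
rewrite mulr0 subr0 (le_trans _ (Pwin0_ge0 a b c b_gt0 c2_le _)) // subr_le0.
exact: le_trans (Pbar_le1 a b c x (s t)) th_x.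
Qed.

Theorem symBNE_affine_trunc :
  symBNE_affine F a b c al be s -> symBNE_trunc F a b c al be s.
Proof.
move=> BNE th th_bnd; have th_itv : th \in `[al, be] by rewrite in_itv.
have st_itv := s_itv _ th_itv; split; first by move: st_itv; rewrite in_itv => /andP[].
move=> x x_ge0; rewrite [X in (_ <= X)%E]payoff_trunc_aff //.
have [x_le | x_gt] := leP x al^-1.
  by rewrite payoff_trunc_aff ?in_itv /= ?x_ge0 //; exact: BNE.
apply: le_trans (BNE th th_bnd 0).
by apply: payoff_trunc_le_aff0 => //; case/andP: th_bnd.
Qed.

End truncated_contest.

Theorem proposition6 (R : realType) (F : probability R R) (a b c al be k d : R) :
  0 < b -> 0 < c ->
  0 < al -> al <= be -> be < c ->
  support_is F al be ->
  (0 < prior_variance F)%E ->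
  symBNE_affine F a b c al be (fun t => k * t + d) ->
  0 <= k * be + d ->
  k * al + d <= 1 / al ->
  c ^+ 2 <= 2 * b ->
  a <= b * al ->
  0 <= c * al ^+ 2 - 2 * b * al + a ->
  symBNE_trunc F a b c al be (fun t => k * t + d).
Proof.
(* [0 < c], [be < c], full support and positive variance only serve the
   existence and uniqueness of the affine equilibrium. *)
move=> b_gt0 _ al_gt0 al_le_be _ [F_itv _] _ BNE sbe_ge0 sal_le c2_le a_le quad_ge0.
have s_cont : continuous (fun t => k * t + d).
  have -> : (fun t => k * t + d) = horner (k%:P * 'X + d%:P).
    by apply/funext => t; rewrite !hornerE.
  exact: continuous_horner.
have al_itv : al \in `[al, be] by rewrite in_itv /= lexx al_le_be.
have be_itv : be \in `[al, be] by rewrite in_itv /= lexx al_le_be.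
have slope : k * (be - al) ^+ 2 <= 0.
  by have := symBNE_affine_antitone F_itv s_cont BNE _ _ al_itv be_itv; nra.
apply: symBNE_affine_trunc => // t; rewrite !in_itv /= => t_itv.
have /andP[s_ge s_le] := le_affine_itv d slope t_itv.
by rewrite (le_trans sbe_ge0 s_ge) (le_trans s_le) // -div1r.
Qed.
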